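(* Let $S\subset\mathbf{P}^4_{\mathbb{Q}}$ be a smooth quadric surface such that the double covering $\pi:O\to\mathbf{P}^4_{\mathbb{Q}}$ splits over $S$, $S$ is tangent to the five coordinate hyperplanes $H_0,\ldots,H_4$, and for each $i$ the point of tangency of $S$ with $H_i$ is contained in one of the three lines on $H_i\cap R$. Write $P^{(0)}=(0:x_1^{(0)}:x_2^{(0)}:x_3^{(0)}:x_4^{(0)})$ for the point of tangency of $S$ with $H_0$. Then $x_1^{(0)},x_2^{(0)},x_3^{(0)},x_4^{(0)}\neq0$.
   Context: Let $\Delta'(x_0,\ldots,x_4):=\prod_{i_1,\ldots,i_4\in\{0,1\}}\big(\sqrt{x_0}+(-1)^{i_1}\sqrt{x_1}+(-1)^{i_2}\sqrt{x_2}+(-1)^{i_3}\sqrt{x_3}+(-1)^{i_4}\sqrt{x_4}\big)\in\mathbb{Q}[x_0,\ldots,x_4]$ (degree $8$). $O$ is the double covering $\pi:O\to\mathbf{P}^4_{\mathbb{Q}}$ given by $w^2=(-3)\Delta'(x_0,\ldots,x_4)$; it splits over $S$ if $(-3)\Delta'$ restricted to $S$ is a square, i.e. $\pi^{-1}(S)\to S$ is a trivial double covering. $R$ is the locus $\Delta'=0$ and $H_i$ the hyperplane $x_i=0$. The three lines on $H_0\cap R$ are $\{(0:r:r:s:s)\}$, $\{(0:r:s:r:s)\}$, $\{(0:r:s:s:r)\}$, and analogously for the other $H_i$. $S$ is tangent to $H_i$ at $P$ if $T_PS\subset H_i$. *)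

From HB Require Import structures.
From mathcomp Require Import all_boot all_order all_algebra all_field.
From mathcomp Require Import mpoly.
Set Implicit Arguments. Unset Strict Implicit. Unset Printing Implicit Defensive.
Import Order.TTheory GRing.Theory Num.Theory.
Local Open Scope ring_scope.

(* Points of P^4 are represented by nonzero row vectors in algC^5
   (algC = algebraic closure of Q); all conditions below are invariant
   under rescaling. *)
Definition pt := 'rV[algC]_5.
Definition pcoord (x : pt) (i : 'I_5) : algC := x ord0 i.

Definition dotv (u v : pt) : algC := (u *m v^T) ord0 ord0.

Definition sgnb (b : bool) : algC := if b then -1 else 1.
Definition Delta' (x : pt) : algC :=
  \prod_(e : {ffun 'I_4 -> bool})
    (sqrtC (pcoord x ord0) +
     \sum_(k < 4) sgnb (e k) * sqrtC (pcoord x (lift ord0 k))).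

(* A quadric surface S of P^4_Q, given as { l(x) = 0, x A x^T = 0 } with
   l : 'rV[rat]_5 a linear form and A : 'M[rat]_5 a symmetric matrix. *)
Definition lC (l : 'rV[rat]_5) : pt := map_mx ratr l.
Definition AC (A : 'M[rat]_5) : 'M[algC]_5 := map_mx ratr A.

Definition onS (l : 'rV[rat]_5) (A : 'M[rat]_5) (x : pt) : Prop :=
  x != 0 /\ dotv (lC l) x = 0 /\ dotv (x *m AC A) x = 0.

(* S is a smooth quadric surface: l <> 0, A symmetric, and the Jacobian
   criterion holds at every geometric point (l and the gradient x A of the
   quadric are linearly independent). *)
Definition smooth_quadric_surface (l : 'rV[rat]_5) (A : 'M[rat]_5) : Prop :=
  l != 0 /\ A^T = A /\
  forall x : pt, onS l A x -> \rank (col_mx (lC l) (x *m AC A)) = 2%N.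

(* Projective tangent space T_P S (as a linear subspace of algC^5)
   contained in the hyperplane H_i = {x_i = 0}. *)
Definition tangent_at (l : 'rV[rat]_5) (A : 'M[rat]_5) (i : 'I_5) (P : pt)
  : Prop :=
  onS l A P /\
  forall v : pt, dotv (lC l) v = 0 -> dotv (P *m AC A) v = 0 -> pcoord v i = 0.

(* P lies on one of the three lines of H_i /\ R : x_i = 0 and the other
   four coordinates split into two pairs of equal coordinates
   (e.g. for i = 0 : (0:r:r:s:s), (0:r:s:r:s), (0:r:s:s:r)). *)
Definition on_three_lines (i : 'I_5) (P : pt) : Prop :=
  pcoord P i = 0 /\
  exists a b c d : 'I_5,
    uniq [:: i; a; b; c; d] /\ pcoord P a = pcoord P b /\ pcoord P c = pcoord P d.

(* The double covering w^2 = (-3) Delta' splits over S: (-3) Delta'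
   restricted to S is the square of a quartic form over Q. *)
Definition splits_over (l : 'rV[rat]_5) (A : 'M[rat]_5) : Prop :=
  exists g : {mpoly rat[5]}, g \is 4.-homog /\
    forall x : pt, onS l A x ->
      (-3) * Delta' x = ((map_mpoly ratr g : {mpoly algC[5]}).@[pcoord x]) ^+ 2.

From Pilot Require Import Defs.
From HB Require Import structures.
From mathcomp Require Import all_boot all_order all_algebra all_field.
From mathcomp Require Import mpoly.
From mathcomp Require Import ring lra.
Set Implicit Arguments. Unset Strict Implicit. Unset Printing Implicit Defensive.
Import Order.TTheory GRing.Theory Num.Theory.
Local Open Scope ring_scope.

(* Suppose some coordinate of P0 vanishes.  Since P0 lies on one of the three
   lines of H_0 /\ R, after naming the coordinates 1..4 as h, h', m, n we get
   P0 = e_m + e_n up to scaling.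

   If S spans the hyperplane H_0, every point of S is tangent to H_0 and thus
   lies on the three lines.  Applied to the residual intersection points of S
   with the lines through P0 in the directions e_h, e_h', e_m, this forces the
   polar form B(P0, -) to vanish on all of H_0, against smoothness.

   Otherwise, swapping h and h' if needed, l has a nonzero coefficient outside
   {0, h}.  Let P be the point of tangency with H_h.  Tangency puts P in
   H_0 /\ H_h /\ {l = 0} /\ P0^perp, so P = a P0 + c w, where w spans the
   rational plane {l = 0} /\ H_0 /\ H_h together with P0.  If c = 0, B(P0, -)
   vanishes on the two sections {l = 0} /\ H_0 and {l = 0} /\ H_h, against
   smoothness.  If c <> 0 then B(w, w) = 0 and the rational line through P0 in
   direction w lies on S.  On H_0 /\ H_h, Delta' is the fourth power of a
   quadratic form N, so splitting gives -3 N^4 = g^2 at rational points, hence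
   N = 0 along the line; this forces l_h' = l_m = 0, a contradiction. *)

Lemma coord_e (i k : 'I_5) : ('e_i : pt) ord0 k = (k == i)%:R.
Proof. by rewrite mxE. Qed.

Lemma dotvE (u v : pt) : dotv u v = \sum_i u ord0 i * v ord0 i.
Proof. by rewrite /dotv mxE; apply: eq_bigr => i _; rewrite mxE. Qed.

Lemma dotv_is_scalar (u : pt) : scalar (dotv u).
Proof.
move=> a v w; rewrite !dotvE mulr_sumr -big_split; apply: eq_bigr => i _.
by rewrite !mxE mulrDr mulrCA.
Qed.
HB.instance Definition _ (u : pt) :=
  @GRing.isLinear.Build algC 'rV[algC]_5 algC *%R (dotv u) (dotv_is_scalar u).

Lemma dotv_e (u : pt) (i : 'I_5) : dotv u 'e_i = u ord0 i.
Proof.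
rewrite dotvE (bigD1 i) //= coord_e eqxx mulr1 big1 ?addr0 // => k /negbTE ki.
by rewrite coord_e ki mulr0.
Qed.

Definition bform (M : 'M[algC]_5) (x y : pt) : algC := dotv (x *m M) y.
HB.instance Definition _ M x := @GRing.isLinear.Build algC 'rV[algC]_5 algC
  *%R (bform M x) (dotv_is_scalar (x *m M)).

(* The second intersection of the line through P in direction w with the
   quadric B(x, x) = 0, when P lies on it. *)
Definition residual (M : 'M[algC]_5) (P w : pt) : pt :=
  bform M w w *: P - (2 * bform M P w) *: w.

Section SymmetricForm.
Variable M : 'M[algC]_5.
Hypothesis symM : M^T = M.

Lemma bformC x y : bform M x y = bform M y x.
Proof.
have trE (N : 'M[algC]_1) : N ord0 ord0 = N^T ord0 ord0 by rewrite mxE.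
by rewrite /bform /dotv trE !trmx_mul trmxK symM mulmxA.
Qed.

Lemma bformDl x y z : bform M (x + y) z = bform M x z + bform M y z.
Proof. by rewrite !(bformC _ z) linearD. Qed.

Lemma bformZl a x z : bform M (a *: x) z = a * bform M x z.
Proof. by rewrite !(bformC _ z) linearZ. Qed.

Lemma bform_quad a b x y :
  bform M (a *: x + b *: y) (a *: x + b *: y) =
  a ^+ 2 * bform M x x + 2 * a * b * bform M x y + b ^+ 2 * bform M y y.
Proof.
by rewrite bformDl !bformZl !linearD !linearZ /= (bformC y x); ring.
Qed.

Lemma bform_residual P w : bform M P P = 0 ->
  bform M (residual M P w) (residual M P w) = 0.
Proof. by move=> QP; rewrite /residual -scaleNr bform_quad QP; ring. Qed.

End SymmetricForm.

Lemma uniq5_neq (a b c d f : 'I_5) : uniq [:: a; b; c; d; f] ->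
  (((a == b) = false) * ((b == a) = false) * ((a == c) = false) * ((c == a) = false) *
   ((a == d) = false) * ((d == a) = false) * ((a == f) = false) * ((f == a) = false) *
   ((b == c) = false) * ((c == b) = false) * ((b == d) = false) * ((d == b) = false) *
   ((b == f) = false) * ((f == b) = false) * ((c == d) = false) * ((d == c) = false) *
   ((c == f) = false) * ((f == c) = false) * ((d == f) = false) * ((f == d) = false))%type.
Proof.
rewrite /= !inE !negb_or => /andP[/and4P[ab ac ad af]].
move=> /andP[/and3P[bc bd bf] /andP[/andP[cd cf] /andP[df _]]].
by do !split; apply/negbTE; first [done | by rewrite eq_sym].
Qed.

Lemma mem_uniq5 (a b c d f k : 'I_5) :
  uniq [:: a; b; c; d; f] -> k \in [:: a; b; c; d; f].
Proof.
have sub5 : {subset [:: a; b; c; d; f] <= enum 'I_5} by move=> x _; rewrite mem_enum.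
move=> hu; have [_ ->] := uniq_min_size hu sub5 (eq_leq (size_enum_ord 5)).
by rewrite mem_enum.
Qed.

Lemma uniq5_cases (a b c d f k : 'I_5) :
  uniq [:: a; b; c; d; f] -> k = a \/ k = b \/ k = c \/ k = d \/ k = f.
Proof.
move=> /(mem_uniq5 k); rewrite !inE.
by case/orP=> [/eqP|/or4P[]/eqP]; tauto.
Qed.

Lemma sum_uniq5 (V : nmodType) (F : 'I_5 -> V) (a b c d f : 'I_5) :
  uniq [:: a; b; c; d; f] -> \sum_i F i = F a + F b + F c + F d + F f.
Proof.
move=> hu; rewrite (perm_big [:: a; b; c; d; f]) /=.
  by rewrite !big_cons big_nil addr0 !addrA.
apply: uniq_perm => //; first exact: index_enum_uniq.
by move=> k; rewrite mem_index_enum mem_uniq5.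
Qed.

Lemma pair_point (P : pt) (h h' m n : 'I_5) : uniq [:: ord0; h; h'; m; n] ->
  P ord0 ord0 = 0 -> P ord0 h = 0 -> P ord0 h' = 0 -> P ord0 m = P ord0 n ->
  P = P ord0 n *: ('e_m + 'e_n).
Proof.
move=> hu P0 Ph Ph' Pmn; apply/rowP => k; rewrite !mxE.
case: (uniq5_cases k hu) => [|[|[|[|]]]] ->;
  by rewrite !(uniq5_neq hu) ?eqxx /= ?P0 ?Ph ?Ph' ?Pmn; ring.
Qed.

Lemma three_lines0_pair (P : pt) (j : 'I_5) :
  on_three_lines ord0 P -> j != ord0 -> P ord0 j = 0 ->
  exists h h' m n, uniq [:: ord0; h; h'; m; n] /\ P = P ord0 n *: ('e_m + 'e_n).
Proof.
move=> [P0 [a [b [c [d [hu [Pab Pcd]]]]]]] j0 Pj; rewrite /pcoord in P0 Pab Pcd.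
case: (uniq5_cases j hu) => [|[|[|[|]]]] ej; subst j; first by rewrite eqxx in j0.
- by exists a, b, c, d; split=> //; apply: (pair_point (h := a) (h' := b)); rewrite -?Pab.
- by exists a, b, c, d; split=> //; apply: (pair_point (h := a) (h' := b)); rewrite ?Pab.
- exists c, d, a, b; split; first by rewrite /= !inE !(uniq5_neq hu).
  by apply: (pair_point (h := c) (h' := d)); rewrite -?Pcd //= !inE !(uniq5_neq hu).
- exists c, d, a, b; split; first by rewrite /= !inE !(uniq5_neq hu).
  by apply: (pair_point (h := c) (h' := d)); rewrite ?Pcd //= !inE !(uniq5_neq hu).
Qed.

Lemma three_lines0_coords (y : pt) (a1 a2 m n : 'I_5) :
  uniq [:: ord0; a1; a2; m; n] -> on_three_lines ord0 y ->
  (y ord0 a2 = 0 -> y ord0 m = y ord0 n -> y ord0 a1 = 0) /\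
  (y ord0 a1 = 0 -> y ord0 a2 = 0 -> y ord0 m = y ord0 n).
Proof.
move=> hu [_ [a [b [c [d [hu' [eab ecd]]]]]]]; rewrite /pcoord in eab ecd.
have in4 k : k != ord0 -> k = a1 \/ k = a2 \/ k = m \/ k = n.
  by case: (uniq5_cases k hu) => [|[|[|[|]]]] ->; rewrite ?eqxx //; tauto.
have a0 : a != ord0 by rewrite (uniq5_neq hu').
have b0 : b != ord0 by rewrite (uniq5_neq hu').
have c0 : c != ord0 by rewrite (uniq5_neq hu').
have d0 : d != ord0 by rewrite (uniq5_neq hu').
move: hu' eab ecd.
case: (in4 a a0) => [->|[->|[->|->]]]; case: (in4 b b0) => [->|[->|[->|->]]];
case: (in4 c c0) => [->|[->|[->|->]]]; case: (in4 d d0) => [->|[->|[->|->]]] => hu' eab ecd;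
  (by split=> ? ?; congruence) || by move: hu'; rewrite /= !inE eqxx ?orbT ?andbF.
Qed.

Lemma orthogonal_pair (F : fieldType) (a b x y : F) :
  a * x + b * y = 0 -> (a != 0) || (b != 0) -> exists c, x = - c * b /\ y = c * a.
Proof.
move=> /eqP; rewrite addr_eq0 => /eqP axby.
have [a0 /= b0 | a0 _] := eqVneq a 0.
  exists (- x / b); move: axby; rewrite a0 mul0r => /eqP; rewrite eq_sym oppr_eq0.
  by rewrite mulf_eq0 (negbTE b0) => /eqP->; split; field.
by exists (y / a); split; [rewrite -[x](mulKf a0) axby | ]; field.
Qed.

Definition kervec (R : pzRingType) (L : 'rV[R]_5) (i r : 'I_5) : 'rV[R]_5 :=
  L ord0 r *: 'e_i - L ord0 i *: 'e_r.

Lemma dotv_kervec (L : pt) i r : dotv L (kervec L i r) = 0.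
Proof. by rewrite linearB !linearZ /= !dotv_e mulrC subrr. Qed.

Lemma kervecE (R : pzRingType) (L : 'rV[R]_5) i r k :
  kervec L i r ord0 k = L ord0 r * (k == i)%:R - L ord0 i * (k == r)%:R.
Proof. by rewrite !mxE. Qed.

(* When at most three coordinates a, b, c are nonzero this is
   a^2 + b^2 + c^2 - 2(ab + bc + ca), the product of the four factors
   sqrt a +- sqrt b +- sqrt c (Heron's formula). *)
Definition heron (R : pzRingType) (x : 'rV[R]_5) : R :=
  2 * \sum_i x ord0 i ^+ 2 - (\sum_i x ord0 i) ^+ 2.

Lemma heron_ratr (y : 'rV[rat]_5) : heron (map_mx ratr y : pt) = ratr (heron y).
Proof.
rewrite /heron rmorphB rmorphM rmorph_nat !rmorphXn !rmorph_sum /=.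
by congr (_ * _ - (_ ^+ 2)); apply: eq_bigr => i _; rewrite mxE // rmorphXn.
Qed.

Definition ffun_of_bool4 (q : bool * bool * bool * bool) : {ffun 'I_4 -> bool} :=
  [ffun k : 'I_4 => nth false [:: q.1.1.1; q.1.1.2; q.1.2; q.2] k].

Lemma prod_ffun4 (G : {ffun 'I_4 -> bool} -> algC) :
  \prod_(e : {ffun 'I_4 -> bool}) G e =
  \prod_(a : bool) \prod_(b : bool) \prod_(c : bool) \prod_(d : bool)
    G (ffun_of_bool4 (a, b, c, d)).
Proof.
rewrite (reindex ffun_of_bool4); last first.
  exists (fun e : {ffun 'I_4 -> bool} => (e 0, e 1, e 2, e 3)) => e _.
    by case: e => [[[??]?]?]; rewrite /ffun_of_bool4 !ffunE.
  apply/ffunP => k; rewrite /ffun_of_bool4 ffunE.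
  by case: k => [[|[|[|[|k]]]] hk] //=; congr (e _); apply: val_inj.
by rewrite !pair_bigA; apply: eq_bigr => [[[[a b] c] d]].
Qed.

Lemma Delta'_heron (x : pt) (h : 'I_5) : h != ord0 ->
  x ord0 ord0 = 0 -> x ord0 h = 0 -> Delta' x = heron x ^+ 4.
Proof.
move=> h0 x0 xh.
pose s (i : nat) := sqrtC (x ord0 (inord i)).
have xE (i : 'I_5) : x ord0 i = s i ^+ 2 by rewrite /s sqrtCK inord_val.
have s0 : sqrtC (x ord0 ord0) = s 0%N.
  by rewrite /s (_ : inord 0 = ord0) //; apply: val_inj; rewrite /= inordK.
have sS (k : 'I_4) : sqrtC (x ord0 (lift ord0 k)) = s k.+1.
  by rewrite /s; congr (sqrtC (x _ _)); apply: val_inj; rewrite /= inordK // ltnS.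
rewrite /Delta' /heron /pcoord s0.
under eq_bigr => e _ do under eq_bigr => k _ do rewrite sS.
under [\sum_(i < 5) _ ^+ 2]eq_bigr => i _ do rewrite xE.
under [\sum_(i < 5) x _ _]eq_bigr => i _ do rewrite xE.
have {}s0 : s 0%N = 0 by rewrite -s0 x0 sqrtC0.
have sh : s h = 0 by rewrite /s inord_val xh sqrtC0.
rewrite prod_ffun4 !big_bool /= !big_ord_recr !big_ord0 /= /ffun_of_bool4 !ffunE /=.
clear xh; move: sh h0; case: h => [[|[|[|[|[|?]]]]] hl] sh h0 //=.
all: by rewrite s0 ?sh /sgnb; ring.
Qed.

Lemma meval_ratr (g : {mpoly rat[5]}) (v : 'I_5 -> rat) :
  (map_mpoly ratr g : {mpoly algC[5]}).@[fun i => ratr (v i)] = ratr g.@[v].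
Proof.
rewrite !mevalE (perm_big _ (msupp_map_mpoly _ (fmorph_inj _))) /= rmorph_sum.
apply: eq_bigr => m _; rewrite mcoeff_map_mpoly rmorphM rmorph_prod; congr (_ * _).
by apply: eq_bigr => i _; rewrite rmorphXn.
Qed.

Section SmoothQuadric.
Variables (l : 'rV[rat]_5) (A : 'M[rat]_5).
Hypothesis smoothS : smooth_quadric_surface l A.
Hypothesis splitS : splits_over l A.
Hypothesis tangentS : forall i, exists P, tangent_at l A i P.
Hypothesis linesS : forall i P, tangent_at l A i P -> on_three_lines i P.
Local Notation L := (lC l).
Local Notation M := (Defs.AC A).

Lemma lC_eq0 r : (L ord0 r == 0) = (l ord0 r == 0).
Proof. by rewrite mxE fmorph_eq0. Qed.

Lemma AC_sym : M^T = M.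
Proof. by have [_ [symA _]] := smoothS; rewrite /Defs.AC map_trmx symA. Qed.

Lemma tangent_form_neq0 P : onS l A P -> ~ (forall v, dotv L v = 0 -> bform M P v = 0).
Proof.
move=> SP vanish; have [l_neq0 [_ rankS]] := smoothS.
have [r lr] : exists r, l ord0 r != 0.
  apply/existsP; apply: contraNT l_neq0 => /existsPn l0.
  by apply/eqP/rowP => k; rewrite mxE; apply/eqP/negPn; exact: l0.
have Lr : L ord0 r != 0 by rewrite lC_eq0.
have PML : P *m M = (bform M P 'e_r / L ord0 r) *: L.
  apply/rowP => k; rewrite [RHS]mxE -[(P *m M) ord0 k]dotv_e -/(bform M P 'e_k).
  have := vanish _ (dotv_kervec L r k); rewrite linearB !linearZ /= => /eqP.
  by rewrite subr_eq0 => /eqP e; apply: (mulfI Lr); rewrite -e; field.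
have := rankS P SP; rewrite PML.
set c := _ / _; have -> : col_mx L (c *: L) = col_mx 1 c%:M *m L.
  by rewrite mul_col_mx mul1mx mul_scalar_mx.
move=> rank2; have := leq_trans (mxrankM_maxr (col_mx 1 c%:M) L) (rank_leq_row L).
by rewrite rank2.
Qed.

Lemma tangent_form_vanishes i r P : tangent_at l A i P -> r != i -> l ord0 r != 0 ->
  forall w, dotv L w = 0 -> w ord0 i = 0 -> bform M P w = 0.
Proof.
move=> [_ tanP] ri lr w Lw wi.
pose z := kervec L i r; have Lz : dotv L z = 0 := dotv_kervec L i r.
have zi : z ord0 i = L ord0 r by rewrite kervecE eqxx eq_sym (negbTE ri) /=; ring.
clearbody z; have := tanP (bform M P w *: z - bform M P z *: w).
rewrite !linearB !linearZ /= Lz Lw !mulr0 subrr [X in _ - X]mulrC subrr.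
move=> /(_ erefl erefl); rewrite /pcoord !mxE zi wi oppr0 mulr0 addr0 => /eqP.
by rewrite mulf_eq0 lC_eq0 (negbTE lr) orbF => /eqP.
Qed.

Lemma tangent_form_two_sections i j r P : onS l A P ->
  i != j -> r != i -> r != j -> l ord0 r != 0 ->
  (forall w, dotv L w = 0 -> w ord0 i = 0 -> bform M P w = 0) ->
  (forall w, dotv L w = 0 -> w ord0 j = 0 -> bform M P w = 0) -> False.
Proof.
move=> SP ij ri rj lr Hi Hj; apply: (tangent_form_neq0 SP) => v Lv.
have Lr : L ord0 r != 0 by rewrite lC_eq0.
pose z := kervec L i r; have Lz : dotv L z = 0 := dotv_kervec L i r.
have zi : z ord0 i = L ord0 r by rewrite kervecE eqxx eq_sym (negbTE ri) /=; ring.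
have zj : z ord0 j = 0 by rewrite kervecE eq_sym (negbTE ij) eq_sym (negbTE rj) /=; ring.
clearbody z; set c := v ord0 i / L ord0 r.
rewrite -(subrK (c *: z) v) linearD [X in _ + X]linearZ /= (Hj z Lz zj) mulr0 addr0.
apply: Hi; first by rewrite linearB linearZ /= Lv Lz mulr0 subr0.
by rewrite !mxE zi /c; field.
Qed.

Lemma splits_heron (h : 'I_5) (y : 'rV[rat]_5) : h != ord0 ->
  onS l A (map_mx ratr y) -> y ord0 ord0 = 0 -> y ord0 h = 0 -> heron y = 0.
Proof.
have [g [_ gsq]] := splitS; move=> h0 Sy y0 yh; move: (gsq _ Sy).
rewrite (Delta'_heron h0) ?mxE ?y0 ?yh ?rmorph0 // heron_ratr.
have coordE : pcoord (map_mx ratr y) =1 (fun i => ratr (y ord0 i)).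
  by move=> i; rewrite /pcoord mxE.
rewrite (meval_eq _ coordE) meval_ratr -(rmorph_nat ratr 3) -rmorphN.
rewrite -!rmorphXn -rmorphM => /fmorph_inj eq_sq.
(* over Q, -3 N^4 <= 0 <= g^2 *)
have : heron y ^+ 4 = 0 by nra.
by move/eqP; rewrite expf_eq0 => /eqP.
Qed.

Lemma rational_isotropic_line (h h' m n : 'I_5) : uniq [:: ord0; h; h'; m; n] ->
  l ord0 m + l ord0 n = 0 -> (l ord0 h' != 0) || (l ord0 m != 0) ->
  bform M ('e_m + 'e_n) ('e_m + 'e_n) = 0 -> bform M ('e_m + 'e_n) (kervec L m h') = 0 ->
  bform M (kervec L m h') (kervec L m h') = 0 -> False.
Proof.
move=> hu lmn lhm Qp Bpw Qw; have neq := uniq5_neq hu.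
pose y t : 'rV[rat]_5 := 'e_m + 'e_n + t *: kervec l m h'.
have yE k t : y t ord0 k = (k == m)%:R + (k == n)%:R + t * kervec l m h' ord0 k.
  by rewrite !mxE.
have yQE t : map_mx ratr (y t) = 1 *: ('e_m + 'e_n) + ratr t *: kervec L m h'.
  apply/rowP => k; rewrite scale1r !(mxE, kervecE).
  by rewrite !(rmorphD, rmorphM, rmorphN, rmorph_nat).
have Sy t : onS l A (map_mx ratr (y t)).
  split; last split.
  - have yn : y t ord0 n = 1 by rewrite yE kervecE !neq eqxx /=; ring.
    by apply/negP => /eqP/rowP/(_ n); rewrite mxE yn rmorph1 mxE => /eqP; rewrite oner_eq0.
  - rewrite yQE linearD !linearZ /= dotv_kervec linearD /= !dotv_e !mxE -rmorphD lmn.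
    by rewrite rmorph0; ring.
  - by rewrite -/(bform M _ _) yQE (bform_quad AC_sym) Qp Bpw Qw; ring.
have heronE t : heron (y t) = 4 * t * l ord0 m + t ^+ 2 * (l ord0 m + l ord0 h') ^+ 2.
  rewrite /heron !(sum_uniq5 _ hu) !yE !kervecE !neq !eqxx /=; ring.
have h0 : h != ord0 by rewrite neq.
have y0 t : y t ord0 ord0 = 0 by rewrite yE kervecE !neq /=; ring.
have yh t : y t ord0 h = 0 by rewrite yE kervecE !neq /=; ring.
have := splits_heron h0 (Sy 1) (y0 1) (yh 1); rewrite heronE.
have := splits_heron h0 (Sy (-1)) (y0 (-1)) (yh (-1)); rewrite heronE => e1 e2.
have lm0 : l ord0 m = 0 by nra.
have lh'0 : l ord0 h' = 0 by rewrite lm0 in e2; nra.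
by move: lhm; rewrite lm0 lh'0 eqxx.
Qed.

Lemma kerL_pair_decomp (h h' m n : 'I_5) (P : pt) : uniq [:: ord0; h; h'; m; n] ->
  l ord0 m + l ord0 n = 0 -> (l ord0 h' != 0) || (l ord0 m != 0) ->
  dotv L P = 0 -> P ord0 ord0 = 0 -> P ord0 h = 0 ->
  exists c, P = P ord0 n *: ('e_m + 'e_n) + c *: kervec L m h'.
Proof.
move=> hu lmn lhm LP P0 Ph; have neq := uniq5_neq hu.
have Lnm : L ord0 n = - L ord0 m.
  by apply/eqP; rewrite -addr_eq0 addrC !mxE -rmorphD lmn rmorph0.
have : L ord0 h' * P ord0 h' + L ord0 m * (P ord0 m - P ord0 n) = 0.
  by rewrite -LP dotvE (sum_uniq5 _ hu) P0 Ph Lnm; ring.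
move/orthogonal_pair; rewrite !lC_eq0 => /(_ lhm) [c [Ph' Pm]].
have Pm' : P ord0 m = P ord0 n + c * L ord0 h' by rewrite -Pm addrC subrK.
exists c; apply/rowP => k; move: Ph' Pm'; rewrite !(mxE, kervecE) => Ph' Pm'.
by case: (uniq5_cases k hu) => [|[|[|[|]]]] ->; rewrite !neq ?eqxx /= ?P0 ?Ph ?Ph' ?Pm'; ring.
Qed.

Lemma onS_pair_point (m n : 'I_5) (s : algC) : s != 0 ->
  onS l A (s *: ('e_m + 'e_n)) ->
  l ord0 m + l ord0 n = 0 /\ bform M ('e_m + 'e_n) ('e_m + 'e_n) = 0.
Proof.
move=> s0 [_ [/eqP LP /eqP QP]]; split.
  move: LP; rewrite !linearZ linearD /= !dotv_e !mxE -rmorphD mulf_eq0 (negbTE s0).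
  by rewrite fmorph_eq0 => /eqP.
move: QP; rewrite -/(bform M _ _) bformZl ?AC_sym // linearZ /=.
by rewrite !mulf_eq0 (negbTE s0) => /eqP.
Qed.

Lemma tangent_point_meets i j r P0 P : i != j -> r != i -> r != j -> l ord0 r != 0 ->
  tangent_at l A i P0 -> tangent_at l A j P -> P0 ord0 j = 0 ->
  P ord0 i = 0 /\ P ord0 j = 0.
Proof.
move=> ij ri rj lr tP0 tP P0j; have [[_ [LP QP]] tanP] := tP.
split; last exact: tanP P LP QP.
apply: (tP0.2 P LP); rewrite -/(bform M P0 P) bformC ?AC_sym //.
by apply: (tangent_form_vanishes tP rj lr); first by have [_ []] := tP0.1.
Qed.

Lemma no_pair_tangency_generic (h h' m n : 'I_5) (P0 : pt) (s : algC) :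
  uniq [:: ord0; h; h'; m; n] -> tangent_at l A ord0 P0 -> s != 0 ->
  P0 = s *: ('e_m + 'e_n) -> has (fun r => l ord0 r != 0) [:: h'; m; n] -> False.
Proof.
move=> hu tP0 s0 P0E /hasP[r r_in lr]; have neq := uniq5_neq hu.
have [r0 rh] : r != ord0 /\ r != h by move: r_in; rewrite !inE => /or3P[]/eqP->; rewrite !neq.
have SP0 := tP0.1; have SP0' := SP0; rewrite P0E in SP0'.
have [lmn Qp] := onS_pair_point s0 SP0'.
have lhm : (l ord0 h' != 0) || (l ord0 m != 0).
  move: r_in lr; rewrite !inE => /or3P[]/eqP-> lr; rewrite ?lr ?orbT //.
  by move/eqP: lmn; rewrite addr_eq0 => /eqP->; rewrite oppr_eq0 lr orbT.
have [P tP] := tangentS h; have [[Pnz [LP QP]] _] := tP.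
have P0h : P0 ord0 h = 0 by rewrite P0E !mxE !neq /=; ring.
have h0 : ord0 != h by rewrite neq.
have [P_0 P_h] := tangent_point_meets h0 r0 rh lr tP0 tP P0h.
have [c Pdec] := kerL_pair_decomp hu lmn lhm LP P_0 P_h.
set p := 'e_m + 'e_n in P0E Qp Pdec; set w := kervec L m h' in Pdec.
have Bpw : bform M p w = 0.
  have w0 : w ord0 ord0 = 0 by rewrite kervecE !neq /=; ring.
  have := tangent_form_vanishes tP0 r0 lr (dotv_kervec L m h') w0.
  by rewrite P0E bformZl ?AC_sym // => /eqP; rewrite mulf_eq0 (negbTE s0) => /eqP.
have : c ^+ 2 * bform M w w = 0.
  by rewrite -QP -/(bform M P P) Pdec bform_quad ?AC_sym // Qp Bpw; ring.
move/eqP; rewrite mulf_eq0 expf_eq0 /= => /orP[/eqP c0 | /eqP Qw]; last first.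
  exact: rational_isotropic_line hu lmn lhm Qp Bpw Qw.
have Pn0 : P ord0 n != 0.
  by apply: contraNneq Pnz => Pn; rewrite Pdec c0 Pn !scale0r addr0.
apply: (tangent_form_two_sections SP0 h0 r0 rh lr).
  exact: tangent_form_vanishes tP0 r0 lr.
move=> v Lv vh; have := tangent_form_vanishes tP rh lr Lv vh.
rewrite Pdec c0 scale0r addr0 bformZl ?AC_sym // P0E bformZl ?AC_sym //.
by move/eqP; rewrite mulf_eq0 (negbTE Pn0) => /eqP->; rewrite mulr0.
Qed.

Lemma kerL_H0 : (forall k, k != ord0 -> l ord0 k = 0) ->
  forall v, (dotv L v == 0) = (v ord0 ord0 == 0).
Proof.
move=> l0 v; have [/eqP l_neq0 _] := smoothS.
have L0 : L ord0 ord0 != 0.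
  rewrite lC_eq0; apply/eqP => l00; apply: l_neq0; apply/rowP => k; rewrite !mxE.
  by have [->|/l0] := eqVneq k ord0.
rewrite dotvE (bigD1 ord0) //= big1 ?addr0 ?mulf_eq0 ?(negbTE L0) // => k /l0 lk0.
by rewrite mxE lk0 rmorph0 mul0r.
Qed.

Lemma residual_three_lines0 (P0 w : pt) (a1 a2 m n : 'I_5) :
  (forall k, k != ord0 -> l ord0 k = 0) ->
  onS l A P0 -> w ord0 ord0 = 0 -> uniq [:: ord0; a1; a2; m; n] ->
  let y := residual M P0 w in
  (y ord0 a2 = 0 -> y ord0 m = y ord0 n -> y ord0 a1 = 0) /\
  (y ord0 a1 = 0 -> y ord0 a2 = 0 -> y ord0 m = y ord0 n).
Proof.
move=> l0 [_ [LP0 QP0]] w0 hu y; have [-> | ynz] := eqVneq y 0; first by rewrite !mxE.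
have P00 : P0 ord0 ord0 = 0 by apply/eqP; rewrite -(kerL_H0 l0) LP0.
apply: three_lines0_coords hu (linesS _); split=> [|v /eqP]; last first.
  by rewrite (kerL_H0 l0) => /eqP.
split=> //; split; last exact: (bform_residual AC_sym).
by apply/eqP; rewrite (kerL_H0 l0) /y /residual !mxE P00 w0 !mulr0 subrr.
Qed.

Lemma no_pair_tangency_in_H0 (h h' m n : 'I_5) (P0 : pt) (s : algC) :
  uniq [:: ord0; h; h'; m; n] -> tangent_at l A ord0 P0 -> s != 0 ->
  P0 = s *: ('e_m + 'e_n) -> (forall k, k != ord0 -> l ord0 k = 0) -> False.
Proof.
move=> hu tP0 s0 P0E l0; have neq := uniq5_neq hu; have SP0 := tP0.1.
have P0c j : P0 ord0 j = s * ((j == m)%:R + (j == n)%:R) by rewrite P0E !mxE.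
have resE k j : residual M P0 'e_k ord0 j =
    bform M 'e_k 'e_k * P0 ord0 j - 2 * bform M P0 'e_k * (j == k)%:R.
  by rewrite !mxE; ring.
have Bh a1 a2 : uniq [:: ord0; a1; a2; m; n] -> bform M P0 'e_a1 = 0.
  move=> hu2; have neq2 := uniq5_neq hu2.
  have e0 : ('e_a1 : pt) ord0 ord0 = 0 by rewrite mxE neq2.
  have [+ _] := residual_three_lines0 l0 SP0 e0 hu2.
  rewrite /= !resE !P0c !neq2 !eqxx /= => /(_ ltac:(ring) ltac:(ring)) e.
  by apply: (@mulfI _ (-2)); rewrite ?oppr_eq0 ?pnatr_eq0 // mulr0 -e; ring.
have Bm : bform M P0 'e_m = 0.
  have em0 : ('e_m : pt) ord0 ord0 = 0 by rewrite mxE neq.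
  have [_ +] := residual_three_lines0 l0 SP0 em0 hu.
  rewrite /= !resE !P0c !neq !eqxx /= => /(_ ltac:(ring) ltac:(ring))/eqP.
  rewrite -subr_eq0 => /eqP e.
  by apply: (@mulfI _ (-2)); rewrite ?oppr_eq0 ?pnatr_eq0 // mulr0 -e; ring.
have Bn : bform M P0 'e_n = 0.
  have [_ [_ /eqP QP0]] := SP0; move: QP0.
  rewrite -/(bform M P0 P0) {2}P0E linearZ linearD /= Bm add0r.
  by rewrite mulf_eq0 (negbTE s0) => /eqP.
have hu' : uniq [:: ord0; h'; h; m; n] by rewrite /= !inE !neq.
apply: (tangent_form_neq0 SP0) => v /eqP; rewrite (kerL_H0 l0) => /eqP v0.
rewrite (row_sum_delta v) linear_sum (sum_uniq5 _ hu) /= !linearZ /= v0.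
by rewrite (Bh h h') // (Bh h' h) // Bm Bn; ring.
Qed.

Lemma no_pair_tangency (h h' m n : 'I_5) (P0 : pt) : uniq [:: ord0; h; h'; m; n] ->
  tangent_at l A ord0 P0 -> P0 = P0 ord0 n *: ('e_m + 'e_n) -> False.
Proof.
move=> hu tP0 P0E; have s0 : P0 ord0 n != 0.
  by have [P0nz _] := tP0.1; apply: contraNneq P0nz => Pn; rewrite P0E Pn scale0r.
have [lhmn | /negPf lhmn] := boolP (has (fun r => l ord0 r != 0) [:: h'; m; n]).
  exact: no_pair_tangency_generic hu tP0 s0 P0E lhmn.
have [lh | lh] := eqVneq (l ord0 h) 0.
  apply: (no_pair_tangency_in_H0 hu tP0 s0 P0E) => k k0; apply/eqP.
  move: lhmn; rewrite /= => /norP[/negPn lh' /norP[/negPn lm /norP[/negPn ln _]]].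
  by case: (uniq5_cases k hu) k0 => [|[|[|[|]]]] ->; rewrite ?eqxx ?lh.
have hu' : uniq [:: ord0; h'; h; m; n] by rewrite /= !inE !(uniq5_neq hu).
by apply: no_pair_tangency_generic hu' tP0 s0 P0E _; rewrite /= lh.
Qed.

End SmoothQuadric.

Theorem mainTheorem16 (l : 'rV[rat]_5) (A : 'M[rat]_5) :
  smooth_quadric_surface l A ->
  splits_over l A ->
  (forall i : 'I_5, exists P : pt, tangent_at l A i P) ->
  (forall (i : 'I_5) (P : pt), tangent_at l A i P -> on_three_lines i P) ->
  forall P0 : pt, tangent_at l A ord0 P0 ->
  forall j : 'I_5, j != ord0 -> pcoord P0 j != 0.
Proof.
move=> smoothS splitS tangentS linesS P0 tP0 j j0; apply/eqP => P0j.
have [h [h' [m [n [hu P0E]]]]] := three_lines0_pair (linesS _ _ tP0) j0 P0j.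
exact (no_pair_tangency smoothS splitS tangentS linesS hu tP0 P0E).
Qed.
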